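(* Let $(\mathcal C,\otimes,I)$ be a monoidal category and let $G$ be a strong endofunctor on $\mathcal C$ (with strength $\tau^G$) such that the algebraically free monad $G^*$ exists and is strongly generated; regard $G^*$ as a strong monad with strength $\widetilde\tau$. Let $\langle A,\ g: GA\to A,\ m: A\otimes A\to A,\ u: I\to A\rangle$ be a $G$-monoid. Then $\langle A,\ \llbracket g\rrbracket : G^*A\to A,\ m,\ u\rangle$ is an Eilenberg--Moore $G^*$-monoid.
   Context: Structural isomorphisms of the monoidal category are written $\cong$. A monoid is $\langle A, m: A\otimes A\to A, u: I\to A\rangle$ satisfying the usual unit and associativity laws. A strength for an endofunctor $G$ is a natural transformation $\tau^G_{A,B}: GA\otimes B\to G(A\otimes B)$ compatible with the unitor and associator; a strong monad $M$ is a monad with a strength $\tau$ additionally satisfying $\tau\circ(\eta\otimes \mathrm{id})=\eta$ and $\tau\circ(\mu\otimes\mathrm{id})=\mu\circ M\tau\circ\tau$. A $G$-algebra is a pair $\langle C, c: GC\to C\rangle$; morphisms $h$ satisfy $d\circ Gh = h\circ c$. The algebraically free monad $G^*$ exists if the forgetful functor from $G$-algebras to $\mathcal C$ has a left adjoint; the free algebra on $X$ is $\langle G^*X, \mathsf{cons}_X: GG^*X\to G^*X\rangle$ with unit $\eta^{\mathcal F}_X: X\to G^*X$. For a $G$-algebra $g: GA\to A$, $\llbracket g\rrbracket: G^*A\to A$ denotes the unique $G$-algebra morphism $\langle G^*A,\mathsf{cons}\rangle\to\langle A,g\rangle$ with $\llbracket g\rrbracket\circ\eta^{\mathcal F}_A=\mathrm{id}_A$.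 $G^*$ is strongly generated if for every morphism $f: A\otimes B\to C$ and every $G$-algebra $\langle C,c\rangle$ there is a unique $\widehat f: G^*A\otimes B\to C$ with $\widehat f\circ(\eta^{\mathcal F}\otimes\mathrm{id})=f$ and $\widehat f\circ(\mathsf{cons}\otimes \mathrm{id}) = c\circ G\widehat f\circ\tau^G$. In that case $G^*$ is a strong monad with strength $\widetilde\tau_{A,B}=\widehat{f}$ for $f=\eta^{\mathcal F}_{A\otimes B}$ and the algebra $\langle G^*(A\otimes B),\mathsf{cons}\rangle$. A $G$-monoid is a tuple $\langle A, g: GA\to A, m, u\rangle$ where $\langle A,m,u\rangle$ is a monoid and $m\circ(g\otimes\mathrm{id}_A) = g\circ Gm\circ\tau^G_{A,A}$. For a strong monad $M$ with strength $\tau$, an Eilenberg--Moore $M$-monoid is a tuple $\langle A, a: MA\to A, m, u\rangle$ such that $\langle A,a\rangle$ is an Eilenberg--Moore algebra ($a\circ Ma=a\circ\mu_A$, $a\circ\eta_A=\mathrm{id}$), $\langle A,m,u\rangle$ is a monoid, and $m\circ(a\otimes \mathrm{id}_A) = a\circ Mm\circ \tau_{A,A}$. *)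

(* Equality of morphisms is Leibniz. *)
Set Implicit Arguments.
Unset Strict Implicit.

Record MonCat := {
  Obj : Type;
  Hom : Obj -> Obj -> Type;
  idm : forall A, Hom A A;
  comp : forall A B C, Hom B C -> Hom A B -> Hom A C;
  comp_id_l : forall A B (f : Hom A B), comp (idm B) f = f;
  comp_id_r : forall A B (f : Hom A B), comp f (idm A) = f;
  comp_assoc : forall A B C D (h : Hom C D) (g : Hom B C) (f : Hom A B),
      comp h (comp g f) = comp (comp h g) f;
  tens : Obj -> Obj -> Obj;
  tensm : forall A A' B B', Hom A A' -> Hom B B' -> Hom (tens A B) (tens A' B');
  tensm_id : forall A B, tensm (idm A) (idm B) = idm (tens A B);
  tensm_comp : forall A A' A'' B B' B'' (f' : Hom A' A'') (f : Hom A A')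
      (g' : Hom B' B'') (g : Hom B B'),
      tensm (comp f' f) (comp g' g) = comp (tensm f' g') (tensm f g);
  unitI : Obj;
  assoc : forall A B C, Hom (tens (tens A B) C) (tens A (tens B C));
  assoc_inv : forall A B C, Hom (tens A (tens B C)) (tens (tens A B) C);
  lunit : forall A, Hom (tens unitI A) A;
  lunit_inv : forall A, Hom A (tens unitI A);
  runit : forall A, Hom (tens A unitI) A;
  runit_inv : forall A, Hom A (tens A unitI);
  assoc_iso1 : forall A B C, comp (assoc_inv A B C) (assoc A B C) = idm _;
  assoc_iso2 : forall A B C, comp (assoc A B C) (assoc_inv A B C) = idm _;
  lunit_iso1 : forall A, comp (lunit_inv A) (lunit A) = idm _;
  lunit_iso2 : forall A, comp (lunit A) (lunit_inv A) = idm _;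
  runit_iso1 : forall A, comp (runit_inv A) (runit A) = idm _;
  runit_iso2 : forall A, comp (runit A) (runit_inv A) = idm _;
  assoc_nat : forall A A' B B' C C' (f : Hom A A') (g : Hom B B') (h : Hom C C'),
      comp (assoc A' B' C') (tensm (tensm f g) h)
      = comp (tensm f (tensm g h)) (assoc A B C);
  lunit_nat : forall A A' (f : Hom A A'),
      comp (lunit A') (tensm (idm unitI) f) = comp f (lunit A);
  runit_nat : forall A A' (f : Hom A A'),
      comp (runit A') (tensm f (idm unitI)) = comp f (runit A);
  pentagon : forall A B C D,
      comp (assoc A B (tens C D)) (assoc (tens A B) C D)
      = comp (tensm (idm A) (assoc B C D))
          (comp (assoc A (tens B C) D) (tensm (assoc A B C) (idm D)));
  triangle : forall A B,
      comp (tensm (idm A) (lunit B)) (assoc A unitI B)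
      = tensm (runit A) (idm B)
}.

Arguments idm {m} A.
Arguments comp {m A B C} _ _.
Arguments tens {m} _ _.
Arguments tensm {m A A' B B'} _ _.
Arguments unitI {m}.
Arguments assoc {m} A B C.
Arguments lunit {m} A.
Arguments runit {m} A.

Notation "g \o f" := (comp g f) (at level 40, left associativity).
Notation "A (x) B" := (tens A B) (at level 35).
Notation "f <x> g" := (tensm f g) (at level 35).

Record EndoFunctor (C : MonCat) := {
  fobj :> Obj C -> Obj C;
  fmap : forall A B, Hom A B -> Hom (fobj A) (fobj B);
  fmap_id : forall A, fmap (idm A) = idm (fobj A);
  fmap_comp : forall A B D (g : Hom B D) (f : Hom A B),
      fmap (g \o f) = fmap g \o fmap f
}.
Arguments fmap {C} e {A B} _.

Record Strength (C : MonCat) (G : EndoFunctor C) := {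
  st :> forall A B : Obj C, Hom (G A (x) B) (G (A (x) B));
  st_nat : forall A A' B B' (f : Hom A A') (g : Hom B B'),
      st A' B' \o (fmap G f <x> g) = fmap G (f <x> g) \o st A B;
  st_unit : forall A, fmap G (runit A) \o st A unitI = runit (G A);
  st_assoc : forall A B D,
      st A (B (x) D) \o assoc (G A) B D
      = fmap G (assoc A B D) \o st (A (x) B) D \o (st A B <x> idm D)
}.

Definition is_monoid (C : MonCat) (A : Obj C) (m : Hom (A (x) A) A)
    (u : Hom unitI A) : Prop :=
  m \o (m <x> idm A) = m \o (idm A <x> m) \o assoc A A A /\
  m \o (u <x> idm A) = lunit A /\
  m \o (idm A <x> u) = runit A.

Definition is_G_monoid (C : MonCat) (G : EndoFunctor C) (tG : Strength G)
    (A : Obj C) (g : Hom (G A) A) (m : Hom (A (x) A) A) (u : Hom unitI A) : Prop :=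
  is_monoid m u /\ m \o (g <x> idm A) = g \o fmap G m \o tG A A.

(** * Algebraically free monad G^*
   The forgetful functor from G-algebras has a left adjoint, written
   pointwise as a universal arrow: for every X a free G-algebra
   <FG X, cons X> with unit etaF X, such that every f : X -> C into a
   G-algebra <C, c> extends uniquely (as [fold c f]) to an algebra morphism. *)
Record FreeAlgebras (C : MonCat) (G : EndoFunctor C) := {
  FG : Obj C -> Obj C;
  cons : forall X, Hom (G (FG X)) (FG X);
  etaF : forall X, Hom X (FG X);
  fold : forall X D (c : Hom (G D) D) (f : Hom X D), Hom (FG X) D;
  fold_eta : forall X D (c : Hom (G D) D) (f : Hom X D),
      fold c f \o etaF X = f;
  fold_alg : forall X D (c : Hom (G D) D) (f : Hom X D),
      fold c f \o cons X = c \o fmap G (fold c f);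
  fold_unique : forall X D (c : Hom (G D) D) (f : Hom X D) (h : Hom (FG X) D),
      h \o etaF X = f -> h \o cons X = c \o fmap G h -> h = fold c f
}.
Arguments FG {C G} f0 X.
Arguments cons {C G} f0 X.
Arguments etaF {C G} f0 X.
Arguments fold {C G} f0 {X D} c f.

Section FreeMonad.
Context (C : MonCat) (G : EndoFunctor C) (F : FreeAlgebras G).

Definition sem (A : Obj C) (g : Hom (G A) A) : Hom (FG F A) A :=
  fold F g (idm A).

Definition FGmap (X Y : Obj C) (f : Hom X Y) : Hom (FG F X) (FG F Y) :=
  fold F (cons F Y) (etaF F Y \o f).

Definition muF (X : Obj C) : Hom (FG F (FG F X)) (FG F X) :=
  fold F (cons F X) (idm (FG F X)).

Definition strongly_generated (tG : Strength G) : Prop :=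
  forall (A B D : Obj C) (f : Hom (A (x) B) D) (c : Hom (G D) D),
    exists! h : Hom (FG F A (x) B) D,
      h \o (etaF F A <x> idm B) = f /\
      h \o (cons F A <x> idm B) = c \o fmap G h \o tG (FG F A) B.

(* tt is the strength tilde-tau of G^*: tt_{A,B} is the hat of
   eta_{A (x) B} for the algebra <G^*(A (x) B), cons>. *)
Definition is_tilde_strength (tG : Strength G)
    (tt : forall A B : Obj C, Hom (FG F A (x) B) (FG F (A (x) B))) : Prop :=
  forall A B : Obj C,
    tt A B \o (etaF F A <x> idm B) = etaF F (A (x) B) /\
    tt A B \o (cons F A <x> idm B) = cons F (A (x) B) \o fmap G (tt A B) \o tG (FG F A) B.

Definition is_EM_monoid
    (tt : forall A B : Obj C, Hom (FG F A (x) B) (FG F (A (x) B)))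
    (A : Obj C) (a : Hom (FG F A) A) (m : Hom (A (x) A) A) (u : Hom unitI A) : Prop :=
  (a \o FGmap a = a \o muF A /\ a \o etaF F A = idm A) /\
  is_monoid m u /\
  m \o (a <x> idm A) = a \o FGmap m \o tt A A.

End FreeMonad.

Arguments sem {C G} F {A} g.
Arguments FGmap {C G} F {X Y} f.
Arguments muF {C G} F X.
Arguments strongly_generated {C G} F tG.
Arguments is_tilde_strength {C G} F tG tt.
Arguments is_EM_monoid {C G} F tt {A} a m u.

(* The Eilenberg--Moore laws for [[g]] are instances of fold fusion: an
   algebra morphism composed with a fold is again a fold.  For the monoid
   compatibility, both [m o ([[g]] (x) id)] and [[[g]] o G^* m o tt] restrict
   to [m] along [eta (x) id] and are compatible with [cons (x) id] for the
   algebra [g]; strong generation makes such a morphism unique. *)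

Set Implicit Arguments.
Unset Strict Implicit.

Lemma tensm_comp_idr (C : MonCat) (X Y Z B : Obj C) (a : Hom Y Z) (b : Hom X Y) :
  (a \o b) <x> idm B = (a <x> idm B) \o (b <x> idm B).
Proof. rewrite <- tensm_comp, comp_id_l. reflexivity. Qed.

Section FreeAlgebraFacts.
Context (C : MonCat) (G : EndoFunctor C) (F : FreeAlgebras G).

Lemma fold_fusion (X D D' : Obj C) (c : Hom (G D) D) (c' : Hom (G D') D')
    (k : Hom D D') {f : Hom X D} :
  k \o c = c' \o fmap G k -> k \o fold F c f = fold F c' (k \o f).
Proof.
  intro Hk. apply fold_unique.
  - rewrite <- comp_assoc, fold_eta. reflexivity.
  - rewrite <- comp_assoc, fold_alg, comp_assoc, Hk, <- comp_assoc, <- fmap_comp.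
    reflexivity.
Qed.

Lemma sem_eta (A : Obj C) (g : Hom (G A) A) : sem F g \o etaF F A = idm A.
Proof. apply fold_eta. Qed.

Lemma sem_cons (A : Obj C) (g : Hom (G A) A) :
  sem F g \o cons F A = g \o fmap G (sem F g).
Proof. apply fold_alg. Qed.

Lemma sem_FGmap_sem (A : Obj C) (g : Hom (G A) A) :
  sem F g \o FGmap F (sem F g) = sem F g \o muF F A.
Proof.
  unfold FGmap, muF.
  rewrite !(fold_fusion (sem_cons g)), comp_assoc, sem_eta, comp_id_l, comp_id_r.
  reflexivity.
Qed.

Section StronglyGenerated.
Variable tG : Strength G.

Definition is_hat (A B D : Obj C) (f : Hom (A (x) B) D) (c : Hom (G D) D)
    (h : Hom (FG F A (x) B) D) : Prop :=
  h \o (etaF F A <x> idm B) = f /\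
  h \o (cons F A <x> idm B) = c \o fmap G h \o tG (FG F A) B.

Lemma is_hat_unique (A B D : Obj C) (f : Hom (A (x) B) D) (c : Hom (G D) D)
    (h h' : Hom (FG F A (x) B) D) :
  strongly_generated F tG -> is_hat f c h -> is_hat f c h' -> h = h'.
Proof.
  intros Hsg Hh Hh'.
  destruct (Hsg A B D f c) as [hat [_ Huniq]].
  rewrite <- (Huniq h Hh). exact (Huniq h' Hh').
Qed.

Lemma sem_tensm_idr_is_hat (A B D : Obj C) (a : Hom (G A) A) (c : Hom (G D) D)
    (f : Hom (A (x) B) D) :
  f \o (a <x> idm B) = c \o fmap G f \o tG A B ->
  is_hat f c (f \o (sem F a <x> idm B)).
Proof.
  intro Hf. split.
  - rewrite <- comp_assoc, <- tensm_comp_idr, sem_eta, tensm_id, comp_id_r.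
    reflexivity.
  - rewrite <- comp_assoc, <- tensm_comp_idr, sem_cons, tensm_comp_idr,
      comp_assoc, Hf, <- !comp_assoc, (st_nat tG (sem F a) (idm B)),
      fmap_comp, !comp_assoc.
    reflexivity.
Qed.

Lemma sem_FGmap_tilde_strength_is_hat
    {tt : forall A B : Obj C, Hom (FG F A (x) B) (FG F (A (x) B))}
    {A B D : Obj C} (f : Hom (A (x) B) D) (c : Hom (G D) D) :
  is_tilde_strength F tG tt -> is_hat f c (sem F c \o FGmap F f \o tt A B).
Proof.
  intro Htt. destruct (Htt A B) as [Htt_eta Htt_cons].
  assert (Hfold : sem F c \o FGmap F f = fold F c f).
  { unfold FGmap. rewrite (fold_fusion (sem_cons c)), comp_assoc, sem_eta, comp_id_l.
    reflexivity. }
  rewrite Hfold. split.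
  - rewrite <- comp_assoc, Htt_eta, fold_eta. reflexivity.
  - rewrite <- comp_assoc, Htt_cons, !comp_assoc, fold_alg, fmap_comp, !comp_assoc.
    reflexivity.
Qed.

End StronglyGenerated.
End FreeAlgebraFacts.

Theorem lemma9 (C : MonCat) (G : EndoFunctor C) (tG : Strength G)
    (F : FreeAlgebras G) (Hsg : strongly_generated F tG)
    (tt : forall A B : Obj C, Hom (FG F A (x) B) (FG F (A (x) B)))
    (Htt : is_tilde_strength F tG tt)
    (A : Obj C) (g : Hom (G A) A) (m : Hom (A (x) A) A) (u : Hom unitI A) :
  is_G_monoid tG g m u ->
  is_EM_monoid F tt (sem F g) m u.
Proof.
  intros [Hmon Hg].
  split; [split | split].
  - apply sem_FGmap_sem.
  - apply sem_eta.
  - exact Hmon.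
  - exact (is_hat_unique Hsg (sem_tensm_idr_is_hat F Hg)
             (sem_FGmap_tilde_strength_is_hat m g Htt)).
Qed.
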